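(* Let $u$ be a recurrent aperiodic infinite word over $\{0,\ldots,q-1\}$. The valid permutation $\alpha_u$ is ergodic if and only if for every factor $w$ of $u$ the uniform frequency $\rho_w(u)$ exists and $\rho_w(u)\neq 0$.
   Context: For an aperiodic infinite word $u$ over $\{0,\ldots,q-1\}$ with shifts $T^n u=u[n]u[n+1]\cdots$, the valid permutation $\alpha_u$ is the infinite permutation represented by the sequence $(0.T^n u)_{n\ge0}$ of real numbers written in base $q$; equivalently $\alpha_u[i]<\alpha_u[j]$ iff $T^i u$ is lexicographically smaller than $T^j u$. An infinite permutation is an equivalence class of real sequences with pairwise distinct elements, two sequences $(a[n]),(b[n])$ being equivalent iff $a[i]<a[j]\Leftrightarrow b[i]<b[j]$ for all $i,j$. A real sequence $(a[i])_{i\ge 0}$ is canonical if its elements are pairwise distinct, lie in $[0,1]$, and for every $t\in[0,1]$ the ratio $\#\{0\le k<n: a[j+k]<t\}/n\to t$ as $n\to\infty$ uniformly in $j$; a permutation is ergodic if it has a canonical representative. For a factor $w$ of $u$, the uniform frequency $\rho_w(u)$ exists if $|u[i..i+n]|_w/(n+1)$ converges to $\rho_w(u)$ as $n\to\infty$ uniformly in $i$, where $|x|_w$ is the number of occurrences of $w$ in $x$. *)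

From Stdlib Require Import Reals Lra Lia List Arith.
Import ListNotations.
Open Scope R_scope.

Definition word := nat -> nat.

Definition over_alphabet (q : nat) (u : word) : Prop := forall n, (u n < q)%nat.

Definition aperiodic (u : word) : Prop :=
  ~ (exists p N : nat, (0 < p)%nat /\ forall n, (N <= n)%nat -> u (n + p)%nat = u n).

Definition occurs_at (u : word) (w : list nat) (p : nat) : Prop :=
  map (fun k => u (p + k)%nat) (seq 0 (length w)) = w.

Definition occurs_atb (u : word) (w : list nat) (p : nat) : bool :=
  if list_eq_dec Nat.eq_dec (map (fun k => u (p + k)%nat) (seq 0 (length w))) w
  then true else false.

Definition is_factor (u : word) (w : list nat) : Prop := exists p, occurs_at u w p.

Definition recurrent (u : word) : Prop :=
  forall w, is_factor u w -> forall m, exists p, (m <= p)%nat /\ occurs_at u w p.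

(* |u[i..i+n]|_w : occurrences of w inside the factor u[i] ... u[i+n] *)
Definition occ_count (u : word) (w : list nat) (i n : nat) : nat :=
  length (filter (fun p => andb (Nat.leb (p + length w) (i + n + 1)) (occurs_atb u w p))
                 (seq i (n + 1))).

Definition uniform_frequency (u : word) (w : list nat) (rho : R) : Prop :=
  forall eps, eps > 0 -> exists N : nat, forall n i : nat, (N <= n)%nat ->
    Rabs (INR (occ_count u w i n) / INR (n + 1) - rho) < eps.

(* the real number 0.T^n u written in base q: sum_k u[n+k] q^{-(k+1)} *)
Definition shift_value (q : nat) (u : word) (n : nat) (x : R) : Prop :=
  infinite_sum (fun k => INR (u (n + k)%nat) / (INR q ^ (k + 1))) x.

(* a real sequence a represents the valid permutation alpha_u, i.e. a is
   order-equivalent to the sequence (0.T^n u)_n *)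
Definition represents_valid_perm (q : nat) (u : word) (a : nat -> R) : Prop :=
  exists v : nat -> R, (forall n, shift_value q u n (v n)) /\
    forall i j, a i < a j <-> v i < v j.

Fixpoint count_below (a : nat -> R) (j : nat) (t : R) (n : nat) : nat :=
  match n with
  | O => O
  | S m => (count_below a j t m + (if Rlt_dec (a (j + m)%nat) t then 1 else 0))%nat
  end.

Definition canonical (a : nat -> R) : Prop :=
  (forall i j, i <> j -> a i <> a j) /\
  (forall i, 0 <= a i <= 1) /\
  (forall t, 0 <= t <= 1 ->
     forall eps, eps > 0 -> exists N : nat, forall n j : nat, (N <= n)%nat -> (0 < n)%nat ->
       Rabs (INR (count_below a j t n) / INR n - t) < eps).

Definition valid_perm_ergodic (q : nat) (u : word) : Prop :=
  exists a, represents_valid_perm q u a /\ canonical a.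

From Stdlib Require Import Reals Lra Lia List Arith Classical IndefiniteDescription.
Import ListNotations.
Open Scope R_scope.

(* If [a] canonically represents alpha_u, the positions where a factor [w] occurs are exactly
   those whose shifts begin with [w]; they form an interval for the lexicographic order, so up to
   its two endpoints (each value of [a] being taken at most once) they are the [k] with
   [s < a k < t].  Uniform distribution of [a] then gives [w] the uniform frequency [t - s], which
   is positive because [w] occurs twice.

   Conversely, let [a k] be the limit, as [L] grows, of the total frequency of the length-[L]
   factors lexicographically below the length-[L] prefix of [T^k u].  Recurrence puts a third
   shift between any two, and that shift's cylinders have positive frequency, so [a] is strictly
   increasing along the lexicographic order and represents alpha_u.  Aperiodicity together with
   positive frequencies makes long factors rare, so the event [a k < t] is squeezed between two
   unions of cylinders whose frequencies are close to [t]: [a] is uniformly distributed. *)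

(** * Counting positions in windows *)

Fixpoint wcount (P : nat -> bool) (j n : nat) : nat :=
  match n with
  | O => O
  | S m => (wcount P j m + Nat.b2n (P (j + m)%nat))%nat
  end.

Lemma wcount_le P j n : (wcount P j n <= n)%nat.
Proof. induction n; simpl; [lia|]. pose proof (Nat.b2n_le_1 (P (j + n)%nat)); lia. Qed.

Lemma wcount_add P j m n : wcount P j (m + n) = (wcount P j m + wcount P (j + m) n)%nat.
Proof.
  induction n as [|n IHn]; simpl; [now rewrite Nat.add_0_r|].
  rewrite Nat.add_succ_r; simpl. rewrite IHn.
  replace (j + (m + n))%nat with (j + m + n)%nat by lia. lia.
Qed.

Lemma wcount_ext (P Q : nat -> bool) j n :
  (forall x, P x = Q x) -> wcount P j n = wcount Q j n.
Proof. intros H; induction n; simpl; auto. now rewrite IHn, H. Qed.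

Lemma wcount_mono (P Q : nat -> bool) j n :
  (forall x, P x = true -> Q x = true) -> (wcount P j n <= wcount Q j n)%nat.
Proof.
  intros H; induction n; simpl; [lia|].
  destruct (P (j + n)%nat) eqn:E; [rewrite (H _ E)|]; simpl; lia.
Qed.

Lemma wcount_list_sum_S (Ps : list (nat -> bool)) j n :
  list_sum (map (fun P => wcount P j (S n)) Ps) =
  (list_sum (map (fun P => wcount P j n) Ps) +
   list_sum (map (fun P => Nat.b2n (P (j + n)%nat)) Ps))%nat.
Proof. induction Ps as [|P Ps IH]; [reflexivity|]. simpl in IH |- *. rewrite IH. lia. Qed.

Lemma wcount_list_sum_le (Ps Qs : list (nat -> bool)) j n :
  (forall x, (list_sum (map (fun P => Nat.b2n (P x)) Ps) <=
              list_sum (map (fun Q => Nat.b2n (Q x)) Qs))%nat) ->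
  (list_sum (map (fun P => wcount P j n) Ps) <= list_sum (map (fun Q => wcount Q j n) Qs))%nat.
Proof.
  intros H. induction n.
  - clear H. induction Ps; simpl in *; lia.
  - rewrite (wcount_list_sum_S Ps), (wcount_list_sum_S Qs). specialize (H (j + n)%nat). lia.
Qed.

Lemma wcount_eq0 (P : nat -> bool) j n :
  (forall k, (k < n)%nat -> P (j + k)%nat = false) -> wcount P j n = 0%nat.
Proof.
  induction n; intros H; simpl; auto.
  rewrite IHn by (intros; apply H; lia). rewrite H by lia. reflexivity.
Qed.

Lemma wcount_pos (P : nat -> bool) j n :
  (0 < wcount P j n)%nat -> exists k, (k < n)%nat /\ P (j + k)%nat = true.
Proof.
  intros H. apply NNPP; intros Hno. rewrite wcount_eq0 in H; [lia|].
  intros k Hk. apply Bool.not_true_iff_false. intros E. eauto.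
Qed.

Lemma wcount_le_1 (P : nat -> bool) j n :
  (forall a b, (a < n)%nat -> (b < n)%nat -> P (j + a)%nat = true -> P (j + b)%nat = true -> a = b) ->
  (wcount P j n <= 1)%nat.
Proof.
  induction n; intros H; simpl; [lia|].
  destruct (P (j + n)%nat) eqn:E; simpl.
  - rewrite wcount_eq0; [lia|]. intros k Hk. apply Bool.not_true_iff_false. intros E2.
    specialize (H k n ltac:(lia) ltac:(lia) E2 E). lia.
  - rewrite Nat.add_0_r. apply IHn. intros a b Ha Hb. apply H; lia.
Qed.

(* Each block of [S D] consecutive positions holds at most one position satisfying [P]. *)
Lemma wcount_separated (P : nat -> bool) D :
  (forall x y, P x = true -> P y = true -> (x < y)%nat -> (D < y - x)%nat) ->
  forall j n, (S D * wcount P j n <= n + S D)%nat.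
Proof.
  intros H j n.
  assert (Hblock : forall j', (wcount P j' (S D) <= 1)%nat).
  { intros j'. apply wcount_le_1. intros a b Ha Hb Pa Pb.
    destruct (lt_eq_lt_dec a b) as [[Hl|Hl]|Hl]; auto.
    - specialize (H _ _ Pa Pb ltac:(lia)). lia.
    - specialize (H _ _ Pb Pa ltac:(lia)). lia. }
  assert (Hblocks : forall k, (wcount P j (k * S D) <= k)%nat).
  { induction k; [simpl; lia|].
    replace (S k * S D)%nat with (k * S D + S D)%nat by lia.
    rewrite wcount_add. specialize (Hblock (j + k * S D)%nat). lia. }
  set (k := (n / S D + 1)%nat).
  assert (Hn : (n <= k * S D)%nat).
  { pose proof (Nat.div_mod n (S D) ltac:(lia)). pose proof (Nat.mod_upper_bound n (S D) ltac:(lia)).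
    unfold k. nia. }
  assert (wcount P j n <= wcount P j (k * S D))%nat.
  { replace (k * S D)%nat with (n + (k * S D - n))%nat by lia. rewrite wcount_add. lia. }
  specialize (Hblocks k). pose proof (Nat.Div0.mul_div_le n (S D)). unfold k in *. nia.
Qed.

Lemma wcount_filter (P : nat -> bool) j n : length (filter P (seq j n)) = wcount P j n.
Proof.
  induction n; [reflexivity|]. rewrite seq_S, filter_app, length_app, IHn. simpl.
  destruct (P (j + n)%nat); simpl; lia.
Qed.

Definition bltR (x t : R) : bool := if Rlt_dec x t then true else false.

Lemma bltR_spec x t : bltR x t = true <-> x < t.
Proof. unfold bltR. destruct (Rlt_dec x t); split; intros; auto; try discriminate; lra. Qed.

Lemma count_below_wcount a j t n : count_below a j t n = wcount (fun x => bltR (a x) t) j n.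
Proof.
  induction n; simpl; auto. rewrite IHn. unfold bltR.
  destruct (Rlt_dec (a (j + n)%nat) t); simpl; lia.
Qed.

(** * Uniform convergence of window ratios *)

Definition ucv (f : nat -> nat -> nat) (r : R) : Prop :=
  forall eps, eps > 0 -> exists N : nat, forall n j : nat, (N <= n)%nat -> (0 < n)%nat ->
    Rabs (INR (f j n) / INR n - r) < eps.

Definition udensity (P : nat -> bool) (r : R) : Prop := ucv (wcount P) r.

Lemma INR_mul_unbounded c e : 0 < e -> exists N : nat, forall n, (N <= n)%nat -> c < e * INR n.
Proof.
  intros He. destruct (INR_unbounded (c / e)) as [N HN]. exists N. intros n Hn.
  apply le_INR in Hn. apply (Rmult_lt_reg_r (/ e)); [now apply Rinv_0_lt_compat|].
  replace (e * INR n * / e) with (INR n) by (field; lra). unfold Rdiv in HN. lra.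
Qed.

Lemma ratio_bounds x n r e : (0 < n)%nat -> Rabs (x / INR n - r) < e ->
  (r - e) * INR n < x < (r + e) * INR n.
Proof.
  intros Hn H. apply lt_0_INR in Hn. apply Rabs_def2 in H.
  replace x with (x / INR n * INR n) by (field; lra). split; apply Rmult_lt_compat_r; lra.
Qed.

Lemma ratio_close x n r e : (0 < n)%nat -> (r - e) * INR n < x < (r + e) * INR n ->
  Rabs (x / INR n - r) < e.
Proof.
  intros Hn [H1 H2]. apply lt_0_INR in Hn. apply Rabs_def1.
  - apply (Rmult_lt_reg_r (INR n)); auto. unfold Rdiv.
    rewrite Rmult_minus_distr_r, Rmult_assoc, Rinv_l by lra. lra.
  - apply (Rmult_lt_reg_r (INR n)); auto. unfold Rdiv.
    rewrite Rmult_minus_distr_r, Rmult_assoc, Rinv_l by lra. lra.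
Qed.

Lemma ucv_bounded_diff (f g : nat -> nat -> nat) (K : nat) r :
  (forall j n, (f j n <= g j n + K)%nat /\ (g j n <= f j n + K)%nat) -> ucv f r -> ucv g r.
Proof.
  intros Hd Hf eps Heps.
  destruct (Hf (eps / 2)) as [N1 HN1]; [lra|].
  destruct (INR_mul_unbounded (INR K) (eps / 2)) as [N2 HN2]; [lra|].
  exists (Nat.max N1 N2). intros n j Hn Hn0.
  specialize (HN1 n j ltac:(lia) Hn0). specialize (HN2 n ltac:(lia)).
  assert (Hnp : 0 < INR n) by (apply lt_0_INR; lia).
  assert (Hdiff : Rabs (INR (g j n) - INR (f j n)) <= INR K).
  { destruct (Hd j n) as [H1 H2]. apply le_INR in H1, H2. rewrite plus_INR in H1, H2.
    apply Rabs_le. lra. }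
  replace (INR (g j n) / INR n - r)
    with ((INR (f j n) / INR n - r) + (INR (g j n) - INR (f j n)) / INR n) by (field; lra).
  eapply Rle_lt_trans; [apply Rabs_triang|].
  unfold Rdiv at 2. rewrite Rabs_mult, Rabs_inv, (Rabs_right (INR n)) by lra.
  assert (Rabs (INR (g j n) - INR (f j n)) * / INR n <= INR K * / INR n)
    by (apply Rmult_le_compat_r; [left; apply Rinv_0_lt_compat|]; lra).
  assert (INR K * / INR n < eps / 2).
  { apply (Rmult_lt_reg_r (INR n)); [lra|]. rewrite Rmult_assoc, Rinv_l by lra. lra. }
  lra.
Qed.

Lemma ucv_le_linear (f : nat -> nat -> nat) r c K :
  ucv f r -> (forall n, (0 < n)%nat -> INR (f 0%nat n) <= c * INR n + INR K) -> r <= c.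
Proof.
  intros Hf Hb. destruct (Rle_or_lt r c) as [|Hlt]; auto. exfalso.
  destruct (Hf ((r - c) / 2)) as [N1 HN1]; [lra|].
  destruct (INR_mul_unbounded (INR K) ((r - c) / 2)) as [N2 HN2]; [lra|].
  set (n := Nat.max N1 (Nat.max 1 N2)).
  pose proof (ratio_bounds _ n _ _ ltac:(lia) (HN1 n 0%nat ltac:(lia) ltac:(lia))).
  specialize (Hb n ltac:(lia)). specialize (HN2 n ltac:(lia)). lra.
Qed.

Lemma ucv_ge_linear (f : nat -> nat -> nat) r c K :
  ucv f r -> (forall n, (0 < n)%nat -> c * INR n <= INR (f 0%nat n) + INR K) -> c <= r.
Proof.
  intros Hf Hb. destruct (Rle_or_lt c r) as [|Hlt]; auto. exfalso.
  destruct (Hf ((c - r) / 2)) as [N1 HN1]; [lra|].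
  destruct (INR_mul_unbounded (INR K) ((c - r) / 2)) as [N2 HN2]; [lra|].
  set (n := Nat.max N1 (Nat.max 1 N2)).
  pose proof (ratio_bounds _ n _ _ ltac:(lia) (HN1 n 0%nat ltac:(lia) ltac:(lia))).
  specialize (Hb n ltac:(lia)). specialize (HN2 n ltac:(lia)). lra.
Qed.

Lemma ucv_le (f g : nat -> nat -> nat) r1 r2 :
  ucv f r1 -> ucv g r2 -> (forall j n, (f j n <= g j n)%nat) -> r1 <= r2.
Proof.
  intros Hf Hg H. destruct (Rle_or_lt r1 r2) as [|Hlt]; auto. exfalso.
  destruct (Hf ((r1 - r2) / 2)) as [N1 HN1]; [lra|].
  destruct (Hg ((r1 - r2) / 2)) as [N2 HN2]; [lra|].
  set (n := Nat.max (S N1) N2).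
  pose proof (ratio_bounds _ n _ _ ltac:(lia) (HN1 n 0%nat ltac:(lia) ltac:(lia))).
  pose proof (ratio_bounds _ n _ _ ltac:(lia) (HN2 n 0%nat ltac:(lia) ltac:(lia))).
  pose proof (le_INR _ _ (H 0%nat n)). nra.
Qed.

Lemma ucv_unique f r1 r2 : ucv f r1 -> ucv f r2 -> r1 = r2.
Proof. intros H1 H2. apply Rle_antisym; apply (ucv_le f f); auto. Qed.

Lemma ucv_nonneg f r : ucv f r -> 0 <= r.
Proof.
  intros Hf. apply (ucv_ge_linear f r 0 0 Hf). intros n _. simpl.
  rewrite Rmult_0_l, Rplus_0_r. apply pos_INR.
Qed.

Lemma ucv_zero : ucv (fun _ _ => 0%nat) 0.
Proof.
  intros e He. exists 0%nat. intros n j _ _. simpl.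
  unfold Rdiv. rewrite Rmult_0_l, Rminus_0_r, Rabs_R0. lra.
Qed.

Lemma ucv_add (f g : nat -> nat -> nat) r1 r2 :
  ucv f r1 -> ucv g r2 -> ucv (fun j n => f j n + g j n)%nat (r1 + r2).
Proof.
  intros Hf Hg eps Heps.
  destruct (Hf (eps / 2)) as [N1 HN1]; [lra|].
  destruct (Hg (eps / 2)) as [N2 HN2]; [lra|].
  exists (Nat.max N1 N2). intros n j Hn Hn0.
  specialize (HN1 n j ltac:(lia) Hn0). specialize (HN2 n j ltac:(lia) Hn0).
  assert (0 < INR n) by (apply lt_0_INR; lia).
  rewrite plus_INR.
  replace ((INR (f j n) + INR (g j n)) / INR n - (r1 + r2))
    with ((INR (f j n) / INR n - r1) + (INR (g j n) / INR n - r2)) by (field; lra).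
  eapply Rle_lt_trans; [apply Rabs_triang|]. lra.
Qed.

Lemma ucv_sub (f g : nat -> nat -> nat) r1 r2 :
  ucv (fun j n => f j n + g j n)%nat r1 -> ucv g r2 -> ucv f (r1 - r2).
Proof.
  intros Hfg Hg eps Heps.
  destruct (Hfg (eps / 2)) as [N1 HN1]; [lra|].
  destruct (Hg (eps / 2)) as [N2 HN2]; [lra|].
  exists (Nat.max N1 N2). intros n j Hn Hn0.
  specialize (HN1 n j ltac:(lia) Hn0). specialize (HN2 n j ltac:(lia) Hn0).
  rewrite plus_INR in HN1. assert (0 < INR n) by (apply lt_0_INR; lia).
  replace (INR (f j n) / INR n - (r1 - r2))
    with (((INR (f j n) + INR (g j n)) / INR n - r1) - (INR (g j n) / INR n - r2)) by (field; lra).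
  eapply Rle_lt_trans; [apply Rabs_triang|]. rewrite Rabs_Ropp. lra.
Qed.

Lemma ucv_ext (f g : nat -> nat -> nat) r : (forall j n, f j n = g j n) -> ucv f r -> ucv g r.
Proof. intros H. apply ucv_bounded_diff with 0%nat. intros j n. rewrite H. lia. Qed.

(** * Occurrences and uniform frequencies *)

Lemma occurs_atb_spec u w p : occurs_atb u w p = true <-> occurs_at u w p.
Proof.
  unfold occurs_atb, occurs_at.
  destruct (list_eq_dec Nat.eq_dec _ _); split; intros; auto; congruence.
Qed.

Lemma nth_map_seq (f : nat -> nat) n k d : (k < n)%nat -> nth k (map f (seq 0 n)) d = f k.
Proof.
  intros Hk. rewrite nth_indep with (d' := f 0%nat) by (rewrite length_map, length_seq; auto).
  rewrite map_nth, seq_nth by auto. reflexivity.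
Qed.

Lemma occurs_at_nth u w p :
  occurs_at u w p <-> forall k, (k < length w)%nat -> u (p + k)%nat = nth k w 0%nat.
Proof.
  unfold occurs_at. split.
  - intros H k Hk. rewrite <- H, nth_map_seq; auto.
  - intros H. apply nth_ext with (d := 0%nat) (d' := 0%nat); rewrite length_map, length_seq; auto.
    intros k Hk. rewrite nth_map_seq; auto.
Qed.

Lemma wcount_late_starts (i n K : nat) : (wcount (fun p => Nat.ltb (i + n) (p + K)) i n <= K)%nat.
Proof.
  set (P := fun p => Nat.ltb (i + n) (p + K)).
  destruct (le_lt_dec n K). { pose proof (wcount_le P i n); lia. }
  replace (wcount P i n) with (wcount P i ((n - K) + K)) by (f_equal; lia).
  rewrite wcount_add, wcount_eq0.
  - pose proof (wcount_le P (i + (n - K)) K); lia.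
  - intros k Hk. apply Nat.ltb_ge. lia.
Qed.

(* [occ_count] only counts occurrences lying entirely inside the window; at most [length w]
   occurrences start in the window and stick out of it. *)
Lemma occ_count_wcount u w i n :
  (occ_count u w i n <= wcount (occurs_atb u w) i (n + 1))%nat /\
  (wcount (occurs_atb u w) i (n + 1) <= occ_count u w i n + length w)%nat.
Proof.
  unfold occ_count. rewrite wcount_filter. split.
  - apply wcount_mono. intros p H. apply andb_prop in H; tauto.
  - pose proof (wcount_late_starts i (n + 1) (length w)).
    pose proof (wcount_list_sum_le [occurs_atb u w]
      [(fun p => Nat.leb (p + length w) (i + n + 1) && occurs_atb u w p)%bool;
       (fun p => Nat.ltb (i + (n + 1)) (p + length w))] i (n + 1)) as Hle.
    simpl in Hle. enough (Hpt : forall m, (Nat.b2n (occurs_atb u w m) <=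
      Nat.b2n (Nat.leb (m + length w) (i + n + 1) && occurs_atb u w m) +
      Nat.b2n (Nat.ltb (i + (n + 1)) (m + length w)))%nat).
    { assert (Hcount := Hle ltac:(intros m; specialize (Hpt m); lia)). lia. }
    intros m.
    destruct (occurs_atb u w m); simpl; [|lia].
    destruct (Nat.leb (m + length w) (i + n + 1)) eqn:E; simpl; [lia|].
    apply Nat.leb_gt in E. replace (Nat.ltb (i + (n + 1)) (m + length w)) with true; simpl; [lia|].
    symmetry; apply Nat.ltb_lt; lia.
Qed.

Lemma uniform_frequency_udensity u w r : uniform_frequency u w r <-> udensity (occurs_atb u w) r.
Proof.
  set (occf := fun j n => match n with O => O | S m => occ_count u w j m end).
  assert (Hocc : uniform_frequency u w r <-> ucv occf r).
  { split.
    - intros H eps Heps. destruct (H eps Heps) as [N HN]. exists (S N). intros [|m] j Hn Hn0; [lia|].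
      specialize (HN m j ltac:(lia)). now rewrite Nat.add_1_r in HN.
    - intros H eps Heps. destruct (H eps Heps) as [N HN]. exists N. intros n i Hn.
      specialize (HN (S n) i ltac:(lia) ltac:(lia)). now rewrite Nat.add_1_r. }
  rewrite Hocc. unfold udensity.
  split; apply ucv_bounded_diff with (K := length w); intros j [|m]; simpl; try lia;
    destruct (occ_count_wcount u w j m) as [H1 H2]; rewrite Nat.add_1_r in H1, H2; simpl in *; lia.
Qed.

Lemma udensity_non_factor u w : ~ is_factor u w -> udensity (occurs_atb u w) 0.
Proof.
  intros Hw. apply (ucv_ext (fun _ _ => 0%nat)); [|apply ucv_zero].
  intros j n. symmetry. apply wcount_eq0. intros k _.
  apply Bool.not_true_iff_false. intros E. apply occurs_atb_spec in E.
  apply Hw. now exists (j + k)%nat.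
Qed.

(** * Lexicographic order of the shifts *)

Definition shift_lt_at (u : word) (i j m : nat) : Prop :=
  (forall k, (k < m)%nat -> u (i + k)%nat = u (j + k)%nat) /\ (u (i + m) < u (j + m))%nat.

Definition shift_lt (u : word) (i j : nat) : Prop := exists m, shift_lt_at u i j m.

Lemma shift_lt_irrefl u i : ~ shift_lt u i i.
Proof. intros [m [_ H]]. lia. Qed.

Lemma aperiodic_shift_neq u i d : aperiodic u -> (0 < d)%nat ->
  exists m, u (i + m)%nat <> u (i + d + m)%nat.
Proof.
  intros Hap Hd. apply NNPP. intros Hno. apply Hap. exists d, i. split; [exact Hd|].
  intros n Hn. apply NNPP. intros Hne. apply Hno. exists (n - i)%nat.
  replace (i + (n - i))%nat with n by lia. replace (i + d + (n - i))%nat with (n + d)%nat by lia.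
  auto.
Qed.

Lemma shift_lt_total u i j : aperiodic u -> i <> j -> shift_lt u i j \/ shift_lt u j i.
Proof.
  intros Hap Hij.
  assert (Hdiff : exists m, u (i + m)%nat <> u (j + m)%nat).
  { destruct (lt_dec i j).
    - destruct (aperiodic_shift_neq u i (j - i) Hap ltac:(lia)) as [m Hm].
      exists m. now replace j with (i + (j - i))%nat by lia.
    - destruct (aperiodic_shift_neq u j (i - j) Hap ltac:(lia)) as [m Hm].
      exists m. replace i with (j + (i - j))%nat by lia. auto. }
  destruct (dec_inh_nat_subset_has_unique_least_element _ (fun m => classic _) Hdiff)
    as [m [[Hm Hmin] _]].
  assert (Hagree : forall k, (k < m)%nat -> u (i + k)%nat = u (j + k)%nat).
  { intros k Hk. apply NNPP. intros Hne. specialize (Hmin k Hne). lia. }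
  destruct (lt_dec (u (i + m)%nat) (u (j + m)%nat)).
  - left. exists m. split; auto.
  - right. exists m. split; [intros; symmetry; auto | lia].
Qed.

Lemma shift_lt_at_agree_l u x y z m :
  (forall k, (k <= m)%nat -> u (x + k)%nat = u (y + k)%nat) ->
  shift_lt_at u y z m -> shift_lt_at u x z m.
Proof.
  intros Hxy [A B]. split.
  - intros k Hk. rewrite Hxy by lia. auto.
  - rewrite Hxy by lia. auto.
Qed.

Lemma shift_lt_at_agree_r u x y z m :
  (forall k, (k <= m)%nat -> u (x + k)%nat = u (y + k)%nat) ->
  shift_lt_at u z y m -> shift_lt_at u z x m.
Proof.
  intros Hxy [A B]. split.
  - intros k Hk. rewrite Hxy by lia. auto.
  - rewrite Hxy by lia. auto.
Qed.

Lemma shift_lt_at_shift u x y m d :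
  (d <= m)%nat -> shift_lt_at u x y m -> shift_lt_at u (x + d) (y + d) (m - d).
Proof.
  intros Hd [A B]. split.
  - intros k Hk. rewrite <- !Nat.add_assoc. apply A. lia.
  - rewrite <- !Nat.add_assoc, Nat.add_sub_assoc, (Nat.add_comm d m), Nat.add_sub by lia. auto.
Qed.

Lemma shift_lt_at_agree_le u x y m n :
  (forall k, (k < n)%nat -> u (x + k)%nat = u (y + k)%nat) -> shift_lt_at u x y m -> (n <= m)%nat.
Proof. intros Hxy [_ B]. destruct (le_lt_dec n m); auto. rewrite Hxy in B by auto. lia. Qed.

(** * The numbers 0.T^n u *)

Lemma Un_cv_ge_eventually U l c N0 : Un_cv U l -> (forall n, (N0 <= n)%nat -> c <= U n) -> c <= l.
Proof.
  intros H Hb. destruct (Rle_or_lt c l) as [|Hlt]; auto. exfalso.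
  destruct (H (c - l)) as [N HN]; [lra|].
  specialize (HN (Nat.max N N0) ltac:(lia)). specialize (Hb (Nat.max N N0) ltac:(lia)).
  unfold Rdist in HN. apply Rabs_def2 in HN. lra.
Qed.

Lemma Un_cv_le_eventually U l c N0 : Un_cv U l -> (forall n, (N0 <= n)%nat -> U n <= c) -> l <= c.
Proof.
  intros H Hb. destruct (Rle_or_lt l c) as [|Hlt]; auto. exfalso.
  destruct (H (l - c)) as [N HN]; [lra|].
  specialize (HN (Nat.max N N0) ltac:(lia)). specialize (Hb (Nat.max N N0) ltac:(lia)).
  unfold Rdist in HN. apply Rabs_def2 in HN. lra.
Qed.

(* Past [m] the partial sums stay above [1/Q^(N+1)]: the positive leading digit outweighs any tail
   of minimal digits; passing the non-minimal digit [c k0] adds a further [1/Q^(k0+1)]. *)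
Lemma signed_digit_partial_sums (Q : R) (c : nat -> R) (m k0 : nat) :
  2 <= Q -> (m < k0)%nat ->
  (forall k, (k < m)%nat -> c k = 0) -> 1 <= c m ->
  (forall k, -(Q - 1) <= c k) -> -(Q - 2) <= c k0 ->
  forall N, (m <= N)%nat -> 1 / Q ^ (N + 1) + (if le_dec k0 N then 1 / Q ^ (k0 + 1) else 0)
                            <= sum_f_R0 (fun k => c k / Q ^ (k + 1)) N.
Proof.
  intros HQ Hk0 Hzero Hm Hge Hk0ge.
  set (D := sum_f_R0 (fun k => c k / Q ^ (k + 1))).
  assert (HQpos : forall k, 0 < Q ^ k) by (intros; apply pow_lt; lra).
  assert (Hdigit : forall N a, a <= c N -> a / Q ^ (N + 1) <= c N / Q ^ (N + 1)).
  { intros N a Ha. unfold Rdiv. apply Rmult_le_compat_r; auto. left. apply Rinv_0_lt_compat; auto. }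
  assert (Hstep : forall N b e, 1 / Q ^ (N + 1) + b <= D N -> -(Q - 1) + e <= c (S N) ->
                   1 / Q ^ (S N + 1) + e / Q ^ (S N + 1) + b <= D (S N)).
  { intros N b e HN Hc. unfold D. rewrite tech5. fold D.
    pose proof (Hdigit _ _ Hc). pose proof (HQpos (N + 1)%nat).
    replace (Q ^ (S N + 1)) with (Q * Q ^ (N + 1)) in * by (simpl; repeat f_equal; lia).
    replace (1 / Q ^ (N + 1)) with (Q / (Q * Q ^ (N + 1))) in HN by (field; lra).
    unfold Rdiv in *. rewrite Rmult_plus_distr_r in *. lra. }
  induction N as [|N IH]; intros HmN.
  - assert (m = 0%nat) by lia. subst m. destruct (le_dec k0 0); [lia|].
    rewrite Rplus_0_r. apply (Hdigit 0%nat 1); auto.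
  - destruct (Nat.eq_dec (S N) m) as [<-|Hne].
    + destruct (le_dec k0 (S N)); [lia|]. unfold D. rewrite tech5, sum_eq_R0.
      * rewrite Rplus_0_l, Rplus_0_r. now apply Hdigit.
      * intros k Hk. rewrite Hzero by lia. unfold Rdiv. ring.
    + specialize (IH ltac:(lia)).
      destruct (Nat.eq_dec k0 (S N)) as [->|Hk].
      * destruct (le_dec (S N) N); [lia|]. destruct (le_dec (S N) (S N)); [|lia].
        pose proof (Hstep N 0 1 IH ltac:(lra)). unfold Rdiv in *. lra.
      * replace (if le_dec k0 (S N) then 1 / Q ^ (k0 + 1) else 0)
          with (if le_dec k0 N then 1 / Q ^ (k0 + 1) else 0)
          by (destruct (le_dec k0 (S N)), (le_dec k0 N); auto; lia).
        pose proof (Hstep N _ 0 IH ltac:(specialize (Hge (S N)); lra)). unfold Rdiv in *. lra.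
Qed.

Lemma signed_digit_series_pos (Q : R) (c : nat -> R) (m k0 : nat) l :
  2 <= Q -> (m < k0)%nat ->
  (forall k, (k < m)%nat -> c k = 0) -> 1 <= c m ->
  (forall k, -(Q - 1) <= c k) -> -(Q - 2) <= c k0 ->
  Un_cv (sum_f_R0 (fun k => c k / Q ^ (k + 1))) l -> 0 < l.
Proof.
  intros HQ Hk0 Hzero Hm Hge Hk0ge Hcv.
  assert (HQpos : forall k, 0 < 1 / Q ^ k)
    by (intros; apply Rdiv_lt_0_compat; [lra|apply pow_lt; lra]).
  enough (1 / Q ^ (k0 + 1) <= l) by (specialize (HQpos (k0 + 1)%nat); lra).
  apply (Un_cv_ge_eventually _ l _ k0 Hcv). intros n Hn.
  pose proof (signed_digit_partial_sums Q c m k0 HQ Hk0 Hzero Hm Hge Hk0ge n ltac:(lia)) as H.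
  destruct (le_dec k0 n); [|lia].
  specialize (HQpos (n + 1)%nat). lra.
Qed.

Section ShiftValues.

Variable q : nat.
Variable u : word.
Hypothesis Hq : over_alphabet q u.
Hypothesis Hap : aperiodic u.

Lemma alphabet_ge_2 : (2 <= q)%nat.
Proof.
  pose proof (Hq 0%nat). destruct (le_lt_dec 2 q); auto. exfalso.
  apply Hap. exists 1%nat, 0%nat. split; [lia|]. intros n _.
  pose proof (Hq n). pose proof (Hq (n + 1)%nat). lia.
Qed.

Lemma aperiodic_not_eventually_const i m c : exists k, (m < k)%nat /\ u (i + k)%nat <> c.
Proof.
  apply NNPP. intros H. apply Hap. exists 1%nat, (i + m + 1)%nat. split; [lia|].
  intros n Hn.
  assert (Hconst : forall x, (i + m < x)%nat -> u x = c).
  { intros x Hx. apply NNPP. intros Hne. apply H. exists (x - i)%nat.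
    replace (i + (x - i))%nat with x by lia. split; [lia|auto]. }
  rewrite !Hconst by lia. reflexivity.
Qed.

Lemma INR_q_ge_2 : 2 <= INR q.
Proof. replace 2 with (INR 2) by (simpl; lra). apply le_INR, alphabet_ge_2. Qed.

Lemma letter_le n : INR (u n) <= INR q - 1.
Proof.
  assert (H : (u n + 1 <= q)%nat) by (pose proof (Hq n); lia).
  apply le_INR in H. rewrite plus_INR in H. simpl in H. lra.
Qed.

Lemma expansion_partial_sum_le n N :
  sum_f_R0 (fun k => INR (u (n + k)%nat) / INR q ^ (k + 1)) N <= 1 - 1 / INR q ^ (N + 1).
Proof.
  pose proof INR_q_ge_2 as HQ. set (Q := INR q) in *.
  induction N as [|N IH]; simpl sum_f_R0.
  - pose proof (letter_le (n + 0)) as H. fold Q in H. simpl. rewrite Rmult_1_r.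
    apply (Rmult_le_compat_r (/ Q)) in H; [|left; apply Rinv_0_lt_compat; lra].
    replace ((Q - 1) * / Q) with (1 - 1 / Q) in H by (field; lra). unfold Rdiv in *. lra.
  - replace (S N + 1)%nat with (S (N + 1)) by lia. simpl (Q ^ S (N + 1)).
    assert (HX : 0 < Q ^ (N + 1)) by (apply pow_lt; lra). set (X := Q ^ (N + 1)) in *.
    pose proof (letter_le (n + S N)). fold Q in H.
    assert (INR (u (n + S N)%nat) / (Q * X) <= (Q - 1) / (Q * X)).
    { unfold Rdiv. apply Rmult_le_compat_r; auto. left; apply Rinv_0_lt_compat. nra. }
    replace ((Q - 1) / (Q * X)) with (1 / X - 1 / (Q * X)) in H0 by (field; lra). lra.
Qed.

Lemma shift_value_exists n : exists x, shift_value q u n x.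
Proof.
  set (Sn := sum_f_R0 (fun k => INR (u (n + k)%nat) / INR q ^ (k + 1))).
  assert (HQ : forall k, 0 < INR q ^ k) by (intros; apply pow_lt; pose proof INR_q_ge_2; lra).
  assert (G : Un_growing Sn).
  { intros N. unfold Sn. rewrite tech5. pose proof (HQ (S N + 1)%nat).
    assert (0 <= INR (u (n + S N)%nat) / INR q ^ (S N + 1))
      by (apply Rmult_le_pos; [apply pos_INR | left; apply Rinv_0_lt_compat; auto]).
    lra. }
  assert (B : has_ub Sn).
  { exists 1. intros x [N ->]. pose proof (expansion_partial_sum_le n N).
    assert (0 < 1 / INR q ^ (N + 1)) by (apply Rdiv_lt_0_compat; [lra|auto]). unfold Sn. lra. }
  destruct (growing_cv _ G B) as [l Hl]. exists l. exact Hl.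
Qed.

(* The digits of [T^j u - T^i u] are [u (j+k) - u (i+k)]; aperiodicity forbids the tail of
   [T^i u] from being constantly [q-1], so the positive leading digit is not cancelled. *)
Lemma shift_value_lt i j x y : shift_value q u i x -> shift_value q u j y -> shift_lt u i j -> x < y.
Proof.
  intros Hx Hy [m [Hagree Hlt]].
  pose proof INR_q_ge_2 as HQ.
  destruct (aperiodic_not_eventually_const i m (q - 1)%nat) as [k0 [Hk0 Hk0']].
  set (c := fun k => INR (u (j + k)%nat) - INR (u (i + k)%nat)).
  enough (0 < y - x) by lra.
  apply (signed_digit_series_pos (INR q) c m k0); auto.
  - intros k Hk. unfold c. rewrite Hagree by auto. ring.
  - unfold c. assert (H : (u (i + m) + 1 <= u (j + m))%nat) by lia.
    apply le_INR in H. rewrite plus_INR in H. simpl in H. lra.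
  - intros k. unfold c. pose proof (letter_le (i + k)). pose proof (pos_INR (u (j + k)%nat)). lra.
  - unfold c. assert (H : (u (i + k0) + 2 <= q)%nat) by (pose proof (Hq (i + k0)%nat); lia).
    apply le_INR in H. rewrite plus_INR in H. simpl in H. pose proof (pos_INR (u (j + k0)%nat)). lra.
  - intros e He. destruct (CV_minus _ _ _ _ Hy Hx e He) as [N HN]. exists N. intros n Hn.
    specialize (HN n Hn). rewrite <- minus_sum in HN. erewrite sum_eq; [exact HN|].
    intros k _. unfold c. field. apply pow_nonzero. lra.
Qed.

End ShiftValues.

(** * Ergodicity forces positive uniform frequencies *)

Lemma occurs_at_shift_between u w i j k :
  occurs_at u w i -> occurs_at u w k -> shift_lt u i j -> shift_lt u j k -> occurs_at u w j.
Proof.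
  rewrite !occurs_at_nth. intros Hi Hk [m1 [A1 B1]] [m2 [A2 B2]] x Hx.
  assert (Hik : forall y, (y < length w)%nat -> u (i + y)%nat = u (k + y)%nat)
    by (intros y Hy; rewrite Hi, Hk; auto).
  rewrite <- Hi by auto.
  destruct (le_lt_dec (length w) m1); [symmetry; apply A1; lia|].
  destruct (le_lt_dec (length w) m2); [rewrite A2 by lia; symmetry; apply Hik; auto|].
  exfalso. destruct (lt_eq_lt_dec m1 m2) as [[H|H]|H].
  - specialize (A2 m1 H). specialize (Hik m1 ltac:(lia)). lia.
  - subst. specialize (Hik m2 ltac:(lia)). lia.
  - specialize (A1 m2 H). specialize (Hik m2 ltac:(lia)). lia.
Qed.

Lemma shift_lt_reflected u (f : nat -> R) : aperiodic u ->
  (forall i j, shift_lt u i j -> f i < f j) -> forall i j, f i < f j <-> shift_lt u i j.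
Proof.
  intros Hap Hf i j. split; auto. intros Hlt.
  destruct (Nat.eq_dec i j) as [->|Hne]; [lra|].
  destruct (shift_lt_total u i j Hap Hne) as [|Hji]; auto.
  specialize (Hf j i Hji). lra.
Qed.

Lemma represents_valid_perm_lt q u a : over_alphabet q u -> aperiodic u ->
  represents_valid_perm q u a -> forall i j, a i < a j <-> shift_lt u i j.
Proof.
  intros Hq Hap [v [Hv Hav]] i j. rewrite Hav. apply shift_lt_reflected; auto.
  intros i' j'. apply (shift_value_lt q u Hq Hap); auto.
Qed.

Definition beqR (x t : R) : bool := if Req_EM_T x t then true else false.

Lemma wcount_value_le_1 (a : nat -> R) z j n : (forall i j, i <> j -> a i <> a j) ->
  (wcount (fun x => beqR (a x) z) j n <= 1)%nat.
Proof.
  intros Hinj. apply wcount_le_1. intros x y _ _. unfold beqR.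
  destruct (Req_EM_T (a (j + x)%nat) z), (Req_EM_T (a (j + y)%nat) z); try discriminate.
  intros _ _. destruct (Nat.eq_dec x y); auto.
  exfalso. apply (Hinj (j + x)%nat (j + y)%nat); [lia|congruence].
Qed.

(* Since [a] takes each value at most once, in every window the counts of [P] and of
   [s <= a x < t] differ by at most one. *)
Lemma canonical_udensity_between a P s t : canonical a -> 0 <= s <= t -> t <= 1 ->
  (forall x, s < a x < t -> P x = true) -> (forall x, P x = true -> s <= a x <= t) ->
  udensity P (t - s).
Proof.
  intros [Hinj [_ Hdist]] Hs Ht Hin Hout.
  set (Pt := fun x => bltR (a x) t). set (Ps := fun x => bltR (a x) s).
  assert (Hbelow : forall r, 0 <= r <= 1 -> udensity (fun x => bltR (a x) r) r).
  { intros r Hr e He. destruct (Hdist r Hr e He) as [N HN]. exists N. intros n j Hn Hn0.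
    rewrite <- count_below_wcount. auto. }
  assert (Hsub : forall j n, (wcount Ps j n <= wcount Pt j n)%nat).
  { intros j n. apply wcount_mono. unfold Ps, Pt. intros x. rewrite !bltR_spec. lra. }
  set (h := fun j n => (wcount Pt j n - wcount Ps j n)%nat).
  assert (Hh : ucv h (t - s)).
  { apply (ucv_sub h (wcount Ps)); [|apply Hbelow; lra].
    apply (ucv_ext (wcount Pt)); [|apply Hbelow; lra].
    intros j n. unfold h. specialize (Hsub j n). lia. }
  apply (ucv_bounded_diff h _ 1); auto. intros j n.
  pose proof (wcount_list_sum_le [P; Ps] [Pt; fun x => beqR (a x) t] j n) as I1.
  pose proof (wcount_list_sum_le [Pt] [P; Ps; fun x => beqR (a x) s] j n) as I2.
  simpl in I1, I2.
  assert (C1 : forall x, (Nat.b2n (P x) + (Nat.b2n (Ps x) + 0) <=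
                          Nat.b2n (Pt x) + (Nat.b2n (beqR (a x) t) + 0))%nat).
  { intros x. unfold Ps, Pt, bltR, beqR.
    destruct (P x) eqn:Ep.
    - specialize (Hout x Ep).
      destruct (Rlt_dec (a x) s); [lra|]. destruct (Rlt_dec (a x) t); simpl; [lia|].
      destruct (Req_EM_T (a x) t); simpl; [lia|lra].
    - destruct (Rlt_dec (a x) s); simpl; [|lia]. destruct (Rlt_dec (a x) t); simpl; [lia|lra]. }
  assert (C2 : forall x, (Nat.b2n (Pt x) + 0 <=
                          Nat.b2n (P x) + (Nat.b2n (Ps x) + (Nat.b2n (beqR (a x) s) + 0)))%nat).
  { intros x. unfold Ps, Pt, bltR, beqR.
    destruct (Rlt_dec (a x) t); simpl; [|lia].
    destruct (Rlt_dec (a x) s); simpl; [lia|].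
    destruct (Req_EM_T (a x) s); simpl; [lia|].
    rewrite (Hin x) by lra. simpl. lia. }
  specialize (I1 C1). specialize (I2 C2).
  pose proof (wcount_value_le_1 a t j n Hinj). pose proof (wcount_value_le_1 a s j n Hinj).
  pose proof (Hsub j n).
  unfold h. split; lia.
Qed.

(* [s] and [t] are the infimum and the supremum of [a] over [O]. *)
Lemma order_convex_hull (a : nat -> R) (O : nat -> Prop) p :
  (forall n, 0 <= a n <= 1) -> O p ->
  (forall i j k, O i -> O k -> a i < a j -> a j < a k -> O j) ->
  exists s t, 0 <= s /\ t <= 1 /\ (forall n, O n -> s <= a n <= t) /\ (forall n, s < a n < t -> O n).
Proof.
  intros Hbnd Hp Hconv.
  destruct (completeness (fun x => exists n, O n /\ x = a n)) as [t [Ht1 Ht2]].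
  { exists 1. intros x [n [_ ->]]. apply Hbnd. }
  { exists (a p). eauto. }
  destruct (completeness (fun x => exists n, O n /\ x = - a n)) as [ms [Hs1 Hs2]].
  { exists 0. intros x [n [_ ->]]. pose proof (Hbnd n). lra. }
  { exists (- a p). eauto. }
  exists (- ms), t. split; [|split; [|split]].
  - enough (ms <= 0) by lra. apply Hs2. intros x [n [_ ->]]. pose proof (Hbnd n). lra.
  - apply Ht2. intros x [n [_ ->]]. apply Hbnd.
  - intros n Hn. assert (- a n <= ms) by (apply Hs1; eauto).
    assert (a n <= t) by (apply Ht1; eauto). lra.
  - intros n [H1 H2].
    destruct (classic (exists i, O i /\ a i < a n)) as [[i [Oi Hi]]|Hnoi].
    2:{ exfalso. enough (ms <= - a n) by lra. apply Hs2. intros x [i [Oi ->]].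
        destruct (Rle_or_lt (- a i) (- a n)); auto. exfalso. apply Hnoi. exists i. split; auto. lra. }
    destruct (classic (exists k, O k /\ a n < a k)) as [[k [Ok Hk]]|Hnok].
    2:{ exfalso. enough (t <= a n) by lra. apply Ht2. intros x [k [Ok ->]].
        destruct (Rle_or_lt (a k) (a n)); auto. exfalso. apply Hnok. eauto. }
    exact (Hconv i n k Oi Ok Hi Hk).
Qed.

Lemma ergodic_positive_frequencies q u : over_alphabet q u -> recurrent u -> aperiodic u ->
  valid_perm_ergodic q u ->
  forall w, is_factor u w -> exists rho, uniform_frequency u w rho /\ rho <> 0.
Proof.
  intros Hq Hrec Hap [a [Hrep Hcan]] w Hw.
  pose proof (represents_valid_perm_lt q u a Hq Hap Hrep) as Hord.
  pose proof Hcan as [Hinj [Hbnd _]].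
  destruct (Hrec w Hw 0%nat) as [p1 [_ Hp1]].
  destruct (Hrec w Hw (S p1)) as [p2 [Hp12 Hp2]].
  destruct (order_convex_hull a (occurs_at u w) p1 Hbnd Hp1) as [s [t [Hs [Ht [Hout Hin]]]]].
  { intros i j k Oi Ok Hij Hjk. apply (occurs_at_shift_between u w i j k); auto; apply Hord; auto. }
  assert (Hst : s < t).
  { pose proof (Hout p1 Hp1). pose proof (Hout p2 Hp2).
    assert (a p1 <> a p2) by (apply Hinj; lia).
    destruct (Rle_or_lt t s); [exfalso; lra | auto]. }
  exists (t - s). split; [|lra].
  apply uniform_frequency_udensity, (canonical_udensity_between a); auto; try lra.
  - intros x Hx. apply occurs_atb_spec. auto.
  - intros x Hx. apply occurs_atb_spec in Hx. auto.
Qed.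

(** * Cylinder masses *)

Fixpoint words (q L : nat) : list (list nat) :=
  match L with
  | O => [[]]
  | S L' => flat_map (fun a => map (cons a) (words q L')) (seq 0 q)
  end.

Lemma in_words q L w : In w (words q L) <-> length w = L /\ Forall (fun a => (a < q)%nat) w.
Proof.
  revert w. induction L; intros w; simpl.
  - split; [intros [<-|[]]; auto|]. intros [H _]. destruct w; simpl in H; auto; lia.
  - rewrite in_flat_map. split.
    + intros [a [Ha Hw]]. apply in_map_iff in Hw. destruct Hw as [w' [<- Hw']].
      apply IHL in Hw'. destruct Hw' as [H1 H2]. apply in_seq in Ha.
      split; [simpl; lia|constructor; auto; lia].
    + intros [H1 H2]. destruct w as [|a w']; [simpl in H1; lia|].
      inversion H2; subst. exists a. split; [apply in_seq; lia|].
      apply in_map, IHL. simpl in H1. split; auto.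
Qed.

Lemma NoDup_words q L : NoDup (words q L).
Proof.
  induction L; simpl; [repeat constructor; auto|].
  assert (G : forall l, NoDup l -> NoDup (flat_map (fun a => map (cons a) (words q L)) l)).
  { induction l as [|a l IHl]; simpl; intros Hl; [constructor|]. inversion Hl; subst.
    apply NoDup_app.
    - apply NoDup_map_NoDup_ForallPairs; auto. intros x y _ _ H. now inversion H.
    - apply IHl; auto.
    - intros x Hx Hx2. apply in_map_iff in Hx. destruct Hx as [w [<- _]].
      apply in_flat_map in Hx2. destruct Hx2 as [b [Hb Hb2]]. apply in_map_iff in Hb2.
      destruct Hb2 as [w' [E _]]. inversion E; subst. auto. }
  apply G, seq_NoDup.
Qed.

Definition factor_at (u : word) (k L : nat) : list nat := map (fun x => u (k + x)%nat) (seq 0 L).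

Lemma length_factor_at u k L : length (factor_at u k L) = L.
Proof. unfold factor_at. now rewrite length_map, length_seq. Qed.

Lemma factor_at_in_words q u k L : over_alphabet q u -> In (factor_at u k L) (words q L).
Proof.
  intros Hq. apply in_words. split; [apply length_factor_at|].
  apply Forall_forall. intros x Hx. unfold factor_at in Hx. apply in_map_iff in Hx.
  destruct Hx as [y [<- _]]. apply Hq.
Qed.

Lemma factor_at_is_factor u k L : is_factor u (factor_at u k L).
Proof. exists k. unfold occurs_at. now rewrite length_factor_at. Qed.

Definition word_eqb (w1 w2 : list nat) : bool := if list_eq_dec Nat.eq_dec w1 w2 then true else false.

Lemma word_eqb_spec w1 w2 : word_eqb w1 w2 = true <-> w1 = w2.
Proof. unfold word_eqb. destruct (list_eq_dec Nat.eq_dec w1 w2); split; intros; auto; congruence. Qed.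

Lemma occurs_atb_factor_at u w k : occurs_atb u w k = word_eqb (factor_at u k (length w)) w.
Proof. reflexivity. Qed.

Definition rsum (g : list nat -> R) (W : list (list nat)) : R :=
  fold_right (fun w acc => g w + acc) 0 W.
Definition nsum (g : list nat -> nat) (W : list (list nat)) : nat :=
  fold_right (fun w acc => (g w + acc)%nat) 0%nat W.

Lemma rsum_ext g1 g2 W : (forall w, In w W -> g1 w = g2 w) -> rsum g1 W = rsum g2 W.
Proof. induction W; simpl; intros H; auto. rewrite H, IHW; auto. Qed.

Lemma rsum_add g1 g2 W : rsum (fun w => g1 w + g2 w) W = rsum g1 W + rsum g2 W.
Proof. induction W; simpl; [lra|]. rewrite IHW; lra. Qed.

Lemma rsum_le g1 g2 W : (forall w, In w W -> g1 w <= g2 w) -> rsum g1 W <= rsum g2 W.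
Proof.
  induction W as [|a W IH]; simpl; intros H; [lra|].
  pose proof (H a (or_introl eq_refl)). pose proof (IH (fun w Hw => H w (or_intror Hw))). lra.
Qed.

Lemma rsum_zero g W : (forall w, In w W -> g w = 0) -> rsum g W = 0.
Proof. induction W; simpl; intros H; auto. rewrite H, IHW; auto. lra. Qed.

Lemma rsum_single g W x : NoDup W -> In x W -> rsum (fun w => if word_eqb w x then g w else 0) W = g x.
Proof.
  induction W as [|y W IH]; simpl; intros Hnd Hx; [destruct Hx|].
  inversion Hnd; subst. destruct Hx as [->|Hx].
  - rewrite rsum_zero.
    + replace (word_eqb x x) with true by (symmetry; now apply word_eqb_spec). lra.
    + intros w Hw. destruct (word_eqb w x) eqn:E; auto. apply word_eqb_spec in E. subst. contradiction.
  - rewrite IH; auto. destruct (word_eqb y x) eqn:E; [|lra].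
    apply word_eqb_spec in E; subst; contradiction.
Qed.

Lemma nsum_zero g W : (forall w, In w W -> g w = 0%nat) -> nsum g W = 0%nat.
Proof. induction W; simpl; intros H; auto. rewrite H, IHW; auto. Qed.

Lemma nsum_indicator (Q : list nat -> bool) W x : NoDup W -> In x W ->
  nsum (fun w => if Q w then Nat.b2n (word_eqb x w) else 0%nat) W = Nat.b2n (Q x).
Proof.
  induction W as [|y W IH]; simpl; intros Hnd Hx; [destruct Hx|].
  inversion Hnd; subst. destruct Hx as [->|Hx].
  - rewrite nsum_zero.
    + replace (word_eqb x x) with true by (symmetry; now apply word_eqb_spec).
      destruct (Q x); simpl; lia.
    + intros w Hw. destruct (Q w); auto. destruct (word_eqb x w) eqn:E; auto.
      apply word_eqb_spec in E. subst. contradiction.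
  - rewrite IH; auto. destruct (Q y); [|lia]. destruct (word_eqb x y) eqn:E; simpl; auto.
    apply word_eqb_spec in E; subst; contradiction.
Qed.

Lemma nsum_add g1 g2 W : nsum (fun w => g1 w + g2 w)%nat W = (nsum g1 W + nsum g2 W)%nat.
Proof. induction W; simpl; auto. rewrite IHW; lia. Qed.

Lemma nsum_ext g1 g2 W : (forall w, g1 w = g2 w) -> nsum g1 W = nsum g2 W.
Proof. intros H; induction W; simpl; [reflexivity|]. now rewrite H, IHW. Qed.

Lemma wcount_by_value (f : nat -> list nat) (W : list (list nat)) (Q : list nat -> bool) j n :
  NoDup W -> (forall k, In (f k) W) ->
  wcount (fun k => Q (f k)) j n =
  nsum (fun w => if Q w then wcount (fun k => word_eqb (f k) w) j n else 0%nat) W.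
Proof.
  intros Hnd Hf. induction n; simpl.
  - rewrite nsum_zero; auto. intros w _. destruct (Q w); auto.
  - rewrite IHn, <- (nsum_indicator Q W (f (j + n)%nat)), <- nsum_add by auto.
    apply nsum_ext. intros w. now destruct (Q w).
Qed.

Lemma ucv_nsum (f : list nat -> nat -> nat -> nat) (r : list nat -> R) W :
  (forall w, In w W -> ucv (f w) (r w)) -> ucv (fun j n => nsum (fun w => f w j n) W) (rsum r W).
Proof.
  induction W as [|w W IH]; simpl; intros H; [apply ucv_zero|].
  apply (ucv_add (f w)); auto.
Qed.

Section Cylinders.

Variable q : nat.
Variable u : word.
Hypothesis Hq : over_alphabet q u.
Variable rho : list nat -> R.
Hypothesis Hrho : forall w, udensity (occurs_atb u w) (rho w).

Definition cyl_mass (L : nat) (Q : list nat -> bool) : R :=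
  rsum (fun w => if Q w then rho w else 0) (words q L).

Lemma cyl_mass_udensity L (Q : list nat -> bool) :
  udensity (fun k => Q (factor_at u k L)) (cyl_mass L Q).
Proof.
  unfold udensity. eapply ucv_ext.
  { intros j n. symmetry. apply (wcount_by_value (fun k => factor_at u k L) (words q L)).
    - apply NoDup_words.
    - intros k. now apply factor_at_in_words. }
  apply ucv_nsum. intros w Hw. destruct (Q w); [|apply ucv_zero].
  apply in_words in Hw. destruct Hw as [Hl _]. subst L.
  apply (ucv_ext (wcount (occurs_atb u w))); [|apply Hrho].
  intros j n. apply wcount_ext. intros k. now rewrite occurs_atb_factor_at.
Qed.

Lemma rho_nonneg w : 0 <= rho w.
Proof. exact (ucv_nonneg _ _ (Hrho w)). Qed.

Lemma cyl_mass_le L Q1 Q2 :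
  (forall w, In w (words q L) -> Q1 w = true -> Q2 w = true) -> cyl_mass L Q1 <= cyl_mass L Q2.
Proof.
  intros H. apply rsum_le. intros w Hw. specialize (H w Hw). pose proof (rho_nonneg w).
  destruct (Q1 w), (Q2 w); try lra; discriminate (H eq_refl).
Qed.

Lemma cyl_mass_ext L Q1 Q2 :
  (forall w, In w (words q L) -> Q1 w = Q2 w) -> cyl_mass L Q1 = cyl_mass L Q2.
Proof. intros H. apply rsum_ext. intros w Hw. now rewrite H. Qed.

Lemma cyl_mass_orb L Q1 Q2 : (forall w, In w (words q L) -> Q1 w = true -> Q2 w = true -> False) ->
  cyl_mass L (fun w => Q1 w || Q2 w)%bool = cyl_mass L Q1 + cyl_mass L Q2.
Proof.
  intros H. unfold cyl_mass. rewrite <- rsum_add. apply rsum_ext. intros w Hw. specialize (H w Hw).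
  destruct (Q1 w), (Q2 w); simpl; try lra; exfalso; auto.
Qed.

Lemma cyl_mass_single L x : In x (words q L) -> cyl_mass L (fun w => word_eqb w x) = rho x.
Proof. intros Hx. apply rsum_single; auto. apply NoDup_words. Qed.

Lemma cyl_mass_false L : cyl_mass L (fun _ => false) = 0.
Proof. now apply rsum_zero. Qed.

Lemma cyl_mass_true L : cyl_mass L (fun _ => true) = 1.
Proof.
  apply (ucv_unique _ _ _ (cyl_mass_udensity L (fun _ => true))).
  intros e He. exists 1%nat. intros n j _ Hn.
  replace (wcount (fun _ => true) j n) with n by (clear; induction n; simpl; lia).
  assert (0 < INR n) by (apply lt_0_INR; auto).
  replace (INR n / INR n - 1) with 0 by (field; lra). rewrite Rabs_R0. lra.
Qed.

End Cylinders.

Fixpoint word_ltb (w1 w2 : list nat) : bool :=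
  match w1, w2 with
  | a :: r1, b :: r2 => (Nat.ltb a b || Nat.eqb a b && word_ltb r1 r2)%bool
  | _, _ => false
  end.

Lemma word_ltb_irrefl w : word_ltb w w = false.
Proof. induction w; simpl; auto. now rewrite Nat.ltb_irrefl, Nat.eqb_refl, IHw. Qed.

Lemma word_ltb_cons a b r1 r2 :
  word_ltb (a :: r1) (b :: r2) = true <-> (a < b)%nat \/ (a = b /\ word_ltb r1 r2 = true).
Proof. simpl. rewrite Bool.orb_true_iff, Bool.andb_true_iff, Nat.ltb_lt, Nat.eqb_eq. tauto. Qed.

Lemma word_ltb_trans w1 w2 w3 : word_ltb w1 w2 = true -> word_ltb w2 w3 = true -> word_ltb w1 w3 = true.
Proof.
  revert w2 w3. induction w1 as [|a r1 IH]; intros [|b r2] [|c r3]; simpl; try discriminate.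
  rewrite !Bool.orb_true_iff, !Bool.andb_true_iff, !Nat.ltb_lt, !Nat.eqb_eq.
  intros [H1|[H1 H1']] [H2|[H2 H2']]; subst; try (left; lia).
  right; split; eauto.
Qed.

Lemma word_ltb_asym w1 w2 : word_ltb w1 w2 = true -> word_ltb w2 w1 = true -> False.
Proof. intros H1 H2. pose proof (word_ltb_trans _ _ _ H1 H2). now rewrite word_ltb_irrefl in H. Qed.

Lemma word_ltb_total w1 w2 : length w1 = length w2 -> w1 <> w2 ->
  word_ltb w1 w2 = true \/ word_ltb w2 w1 = true.
Proof.
  revert w2. induction w1 as [|a r1 IH]; intros [|b r2]; simpl; intros Hl Hne; try discriminate.
  - congruence.
  - rewrite !Bool.orb_true_iff, !Bool.andb_true_iff, !Nat.ltb_lt, !Nat.eqb_eq.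
    destruct (lt_eq_lt_dec a b) as [[H|H]|H]; [left; left; auto| |right; left; auto].
    subst. assert (r1 <> r2) by congruence. destruct (IH r2 ltac:(lia) H); tauto.
Qed.

Lemma words_ltb_total q L w1 w2 : In w1 (words q L) -> In w2 (words q L) -> w1 <> w2 ->
  word_ltb w1 w2 = true \/ word_ltb w2 w1 = true.
Proof.
  intros H1 H2 Hne. apply in_words in H1, H2. apply word_ltb_total; auto. lia.
Qed.

Lemma factor_at_S u i L : factor_at u i (S L) = u i :: factor_at u (S i) L.
Proof.
  unfold factor_at. simpl. rewrite Nat.add_0_r. f_equal. rewrite <- seq_shift, map_map.
  apply map_ext. intros x. f_equal. lia.
Qed.

Lemma word_ltb_factor_at u i j L :
  word_ltb (factor_at u i L) (factor_at u j L) = true <-> exists m, (m < L)%nat /\ shift_lt_at u i j m.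
Proof.
  revert i j. induction L; intros i j.
  - simpl. split; [discriminate|]. intros [m [H _]]. lia.
  - rewrite !factor_at_S, word_ltb_cons, IHL.
    assert (Hs : forall x k, (k + S x)%nat = (S k + x)%nat) by (intros; lia).
    split.
    + intros [H|[H [m [Hm [A B]]]]].
      * exists 0%nat. split; [lia|]. split; [intros; lia|]. now rewrite !Nat.add_0_r.
      * exists (S m). split; [lia|]. split; [|now rewrite !Hs].
        intros [|x] Hx; [now rewrite !Nat.add_0_r|]. rewrite !Hs. apply A; lia.
    + intros [[|m] [Hm [A B]]].
      * left. now rewrite !Nat.add_0_r in B.
      * right. split; [specialize (A 0%nat ltac:(lia)); now rewrite !Nat.add_0_r in A|].
        exists m. split; [lia|]. split; [|now rewrite !Hs in B].
        intros x Hx. specialize (A (S x) ltac:(lia)). now rewrite !Hs in A.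
Qed.

Lemma factor_at_eq u i j L :
  factor_at u i L = factor_at u j L <-> forall x, (x < L)%nat -> u (i + x)%nat = u (j + x)%nat.
Proof.
  unfold factor_at. split.
  - intros H x Hx. pose proof (f_equal (fun l => nth x l 0%nat) H) as H'. simpl in H'.
    now rewrite !nth_map_seq in H'.
  - intros H. apply map_ext_in. intros x Hx. apply in_seq in Hx. apply H. lia.
Qed.

Lemma word_ltb_factor_at_mono u i j L L' : (L <= L')%nat ->
  word_ltb (factor_at u i L) (factor_at u j L) = true ->
  word_ltb (factor_at u i L') (factor_at u j L') = true.
Proof. intros HL. rewrite !word_ltb_factor_at. intros [m [Hm H]]. exists m. split; [lia|auto]. Qed.

Lemma shift_lt_factor_at u i j : shift_lt u i j ->
  exists L0, forall L, (L0 <= L)%nat -> word_ltb (factor_at u i L) (factor_at u j L) = true.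
Proof.
  intros [m Hm]. exists (S m). intros L HL. apply word_ltb_factor_at. exists m. split; [lia|auto].
Qed.

(** * Long factors are rare *)

Lemma udensity_pos_syndetic P r : udensity P r -> 0 < r ->
  exists n, forall i, exists k, (k < n)%nat /\ P (i + k)%nat = true.
Proof.
  intros HP Hr. destruct (HP (r / 2)) as [N HN]; [lra|].
  set (n := Nat.max N 1). exists n. intros i. apply wcount_pos.
  pose proof (ratio_bounds _ n _ _ ltac:(lia) (HN n i ltac:(lia) ltac:(lia))) as [Hlow _].
  assert (0 < INR n) by (apply lt_0_INR; lia).
  apply INR_lt. simpl. nra.
Qed.

Section LongWords.

Variable u : word.
Hypothesis Hap : aperiodic u.
Variable rho : list nat -> R.
Hypothesis Hrho : forall w, udensity (occurs_atb u w) (rho w).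
Hypothesis Hpos : forall w, is_factor u w -> 0 < rho w.

(* Aperiodicity gives some [k0] with [u k0 <> u (k0 + d)]; the factor of length [d+1] at [k0]
   witnesses this and recurs with bounded gaps. *)
Lemma period_defect_syndetic d : (1 <= d)%nat ->
  exists R0, forall i, exists p, (i <= p)%nat /\ (p + d < i + R0)%nat /\ u p <> u (p + d)%nat.
Proof.
  intros Hd.
  destruct (aperiodic_shift_neq u 0 d Hap ltac:(lia)) as [k0 Hk0]. simpl in Hk0.
  set (y := factor_at u k0 (S d)).
  destruct (udensity_pos_syndetic _ _ (Hrho y) (Hpos y (factor_at_is_factor u k0 (S d)))) as [n Hn].
  exists (n + S d)%nat. intros i. destruct (Hn i) as [k [Hk Hocc]].
  apply occurs_atb_spec in Hocc. rewrite occurs_at_nth in Hocc. unfold y in Hocc.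
  rewrite length_factor_at in Hocc.
  exists (i + k)%nat. split; [lia|]. split; [lia|].
  pose proof (Hocc 0%nat ltac:(lia)) as G0. pose proof (Hocc d ltac:(lia)) as G1.
  unfold factor_at in G0, G1. rewrite nth_map_seq in G0, G1 by lia.
  rewrite !Nat.add_0_r in G0. rewrite G0, G1, Nat.add_comm. exact Hk0.
Qed.

Lemma period_defects_syndetic D : exists R0, forall d, (1 <= d <= D)%nat -> forall i,
  exists p, (i <= p)%nat /\ (p + d < i + R0)%nat /\ u p <> u (p + d)%nat.
Proof.
  induction D as [|D [R1 H1]]; [exists 0%nat; intros; lia|].
  destruct (period_defect_syndetic (S D) ltac:(lia)) as [R2 H2].
  exists (Nat.max R1 R2). intros d Hd i.
  destruct (Nat.eq_dec d (S D)) as [->|Hne].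
  - destruct (H2 i) as [p [A [B C]]]. exists p. repeat split; auto. lia.
  - destruct (H1 d ltac:(lia) i) as [p [A [B C]]]. exists p. repeat split; auto. lia.
Qed.

(* In a word of length [R0], any two occurrences lie more than [D] apart, since an overlap at
   distance [d <= D] would make the window [d]-periodic. *)
Lemma long_words_rare eps : eps > 0 -> exists L, forall w, length w = L -> rho w < eps.
Proof.
  intros He.
  destruct (INR_mul_unbounded 1 eps He) as [D HD].
  destruct (period_defects_syndetic D) as [R0 HR].
  exists R0. intros w Hw.
  assert (Hsep : forall x y, occurs_atb u w x = true -> occurs_atb u w y = true -> (x < y)%nat ->
                  (D < y - x)%nat).
  { intros x y Px Py Hxy. destruct (le_lt_dec (y - x) D) as [Hle|]; auto. exfalso.
    apply occurs_atb_spec in Px, Py. rewrite occurs_at_nth in Px, Py.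
    destruct (HR (y - x)%nat ltac:(lia) x) as [p [A [B C]]].
    apply C. specialize (Px (p - x)%nat ltac:(lia)). specialize (Py (p - x)%nat ltac:(lia)).
    replace (x + (p - x))%nat with p in Px by lia.
    replace (y + (p - x))%nat with (p + (y - x))%nat in Py by lia. congruence. }
  assert (HSD : 0 < INR (S D)) by (apply lt_0_INR; lia).
  assert (rho w <= 1 / INR (S D)).
  { apply (ucv_le_linear _ _ _ 1 (Hrho w)). intros n _.
    pose proof (le_INR _ _ (wcount_separated _ D Hsep 0%nat n)) as Hb.
    rewrite mult_INR, plus_INR in Hb.
    apply (Rmult_le_reg_l (INR (S D))); auto.
    change (INR 1) with 1.
    replace (INR (S D) * (1 / INR (S D) * INR n + 1)) with (INR n + INR (S D)) by (field; lra).
    lra. }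
  specialize (HD (S D) ltac:(lia)).
  assert (1 / INR (S D) < eps).
  { apply (Rmult_lt_reg_r (INR (S D))); auto. unfold Rdiv. rewrite Rmult_assoc, Rinv_l by lra. lra. }
  lra.
Qed.

End LongWords.

(** * The canonical representative *)

Lemma occurs_at_factor_at u x n r :
  occurs_at u (factor_at u x n) r -> forall k, (k < n)%nat -> u (r + k)%nat = u (x + k)%nat.
Proof.
  rewrite occurs_at_nth, length_factor_at. intros H k Hk. rewrite H by auto.
  unfold factor_at. now rewrite nth_map_seq.
Qed.

Section Interpolation.

Variable u : word.
Hypothesis Hrec : recurrent u.
Hypothesis Hap : aperiodic u.

(* Take a later occurrence [r] of the prefix of [T^i u] that reaches past the first difference
   with [T^(i+d) u].  Whichever side of [T^i u] the shift [T^r u] falls on, [r] or [r + d] lies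
   strictly between [T^i u] and [T^(i+d) u]. *)
Lemma shift_lt_interpolate_up i d m : shift_lt_at u i (i + d) m ->
  exists k, shift_lt u i k /\ shift_lt u k (i + d).
Proof.
  intros Him.
  destruct (Hrec _ (factor_at_is_factor u i (d + m + 1)) (S i)) as [r [Hr Hocc]].
  pose proof (occurs_at_factor_at _ _ _ _ Hocc) as Hagree.
  destruct (shift_lt_total u i r Hap ltac:(lia)) as [[e Hir]|[e Hri]].
  - exists r. split; [now exists e|]. exists m.
    apply (shift_lt_at_agree_l u r i); auto. intros k Hk. apply Hagree. lia.
  - pose proof (shift_lt_at_agree_le u r i e (d + m + 1) Hagree Hri).
    exists (r + d)%nat. split.
    + exists m. apply (shift_lt_at_agree_r u (r + d) (i + d)); auto.
      intros k Hk. rewrite <- !Nat.add_assoc. apply Hagree. lia.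
    + exists (e - d)%nat. now apply shift_lt_at_shift; [lia|].
Qed.

Lemma shift_lt_interpolate_down j d m : shift_lt_at u (j + d) j m ->
  exists k, shift_lt u (j + d) k /\ shift_lt u k j.
Proof.
  intros Hjm.
  destruct (Hrec _ (factor_at_is_factor u j (d + m + 1)) (S j)) as [r [Hr Hocc]].
  pose proof (occurs_at_factor_at _ _ _ _ Hocc) as Hagree.
  destruct (shift_lt_total u r j Hap ltac:(lia)) as [[e Hrj]|[e Hjr]].
  - exists r. split; [|now exists e]. exists m.
    apply (shift_lt_at_agree_r u r j); auto. intros k Hk. apply Hagree. lia.
  - assert (Hagree' : forall k, (k < d + m + 1)%nat -> u (j + k)%nat = u (r + k)%nat)
      by (intros; symmetry; auto).
    pose proof (shift_lt_at_agree_le u j r e (d + m + 1) Hagree' Hjr).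
    exists (r + d)%nat. split.
    + exists (e - d)%nat. now apply shift_lt_at_shift; [lia|].
    + exists m. apply (shift_lt_at_agree_l u (r + d) (j + d)); auto.
      intros k Hk. rewrite <- !Nat.add_assoc. apply Hagree. lia.
Qed.

Lemma shift_lt_interpolate i j : shift_lt u i j -> exists k, shift_lt u i k /\ shift_lt u k j.
Proof.
  intros [m Hm]. assert (i <> j) by (intros ->; apply (shift_lt_irrefl u j); now exists m).
  destruct (lt_dec i j).
  - replace j with (i + (j - i))%nat in * by lia. eapply shift_lt_interpolate_up; eauto.
  - replace i with (j + (i - j))%nat in * by lia. eapply shift_lt_interpolate_down; eauto.
Qed.

End Interpolation.

Section Construction.

Variable q : nat.
Variable u : word.
Hypothesis Hq : over_alphabet q u.
Variable rho : list nat -> R.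
Hypothesis Hrho : forall w, udensity (occurs_atb u w) (rho w).

Definition mass_below (L : nat) (w : list nat) : R := cyl_mass q rho L (fun w' => word_ltb w' w).
Definition mass_upto (L : nat) (w : list nat) : R := mass_below L w + rho w.

Lemma mass_below_nonneg L w : 0 <= mass_below L w.
Proof.
  rewrite <- (cyl_mass_false q rho L). apply (cyl_mass_le q u rho Hrho). discriminate.
Qed.

Lemma mass_upto_below L w : In w (words q L) -> mass_upto L w = cyl_mass q rho L
  (fun w' => word_ltb w' w || word_eqb w' w)%bool.
Proof.
  intros Hw. unfold mass_upto, mass_below. rewrite cyl_mass_orb, cyl_mass_single; auto.
  intros w' _ H1 H2. apply word_eqb_spec in H2. subst. now rewrite word_ltb_irrefl in H1.
Qed.

Lemma mass_upto_le_below L w1 w2 : In w1 (words q L) -> word_ltb w1 w2 = true ->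
  mass_upto L w1 <= mass_below L w2.
Proof.
  intros Hin Hl. rewrite mass_upto_below by auto. apply (cyl_mass_le q u rho Hrho).
  intros w _ H. apply Bool.orb_true_iff in H. destruct H as [H|H].
  - eapply word_ltb_trans; eauto.
  - apply word_eqb_spec in H. now subst.
Qed.

Lemma mass_upto_le_1 L w : In w (words q L) -> mass_upto L w <= 1.
Proof.
  intros Hin. rewrite mass_upto_below, <- (cyl_mass_true q u Hq rho Hrho L) by auto.
  now apply (cyl_mass_le q u rho Hrho).
Qed.

Definition lower_approx (L k : nat) : R := mass_below L (factor_at u k L).
Definition upper_approx (L k : nat) : R := mass_upto L (factor_at u k L).

Lemma lower_approx_udensity L k :
  udensity (fun k' => word_ltb (factor_at u k' L) (factor_at u k L)) (lower_approx L k).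
Proof. apply (cyl_mass_udensity q u Hq rho Hrho L (fun w => word_ltb w (factor_at u k L))). Qed.

Lemma upper_approx_udensity L k :
  udensity (fun k' => word_ltb (factor_at u k' L) (factor_at u k L) ||
                      word_eqb (factor_at u k' L) (factor_at u k L))%bool (upper_approx L k).
Proof.
  unfold upper_approx. rewrite mass_upto_below by (now apply factor_at_in_words).
  exact (cyl_mass_udensity q u Hq rho Hrho L
    (fun w => word_ltb w (factor_at u k L) || word_eqb w (factor_at u k L))%bool).
Qed.

Lemma lower_approx_le_upper L k : lower_approx L k <= upper_approx L k.
Proof.
  unfold lower_approx, upper_approx, mass_upto.
  pose proof (rho_nonneg u rho Hrho (factor_at u k L)). lra.
Qed.

Lemma upper_approx_le_1 L k : upper_approx L k <= 1.
Proof. apply mass_upto_le_1, factor_at_in_words; auto. Qed.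

Lemma lower_approx_incr L k : lower_approx L k <= lower_approx (S L) k.
Proof.
  apply (ucv_le _ _ _ _ (lower_approx_udensity L k) (lower_approx_udensity (S L) k)).
  intros j n. apply wcount_mono. intros x. apply word_ltb_factor_at_mono. lia.
Qed.

Lemma upper_approx_decr L k : upper_approx (S L) k <= upper_approx L k.
Proof.
  apply (ucv_le _ _ _ _ (upper_approx_udensity (S L) k) (upper_approx_udensity L k)).
  intros j n. apply wcount_mono. intros x H. apply Bool.orb_true_iff in H. apply Bool.orb_true_iff.
  destruct H as [H|H].
  - apply word_ltb_factor_at in H. destruct H as [m [Hm [A B]]].
    destruct (Nat.eq_dec m L) as [->|Hne].
    + right. now apply word_eqb_spec, factor_at_eq.
    + left. apply word_ltb_factor_at. exists m. repeat split; auto. lia.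
  - right. apply word_eqb_spec, factor_at_eq. intros y Hy.
    apply word_eqb_spec in H. rewrite factor_at_eq in H. apply H. lia.
Qed.

Lemma upper_approx_antimono L L' k : (L <= L')%nat -> upper_approx L' k <= upper_approx L k.
Proof. induction 1; [lra|]. pose proof (upper_approx_decr m k). lra. Qed.

Lemma lower_approx_bounded k : has_ub (fun L => lower_approx L k).
Proof.
  exists 1. intros x [L ->].
  pose proof (lower_approx_le_upper L k). pose proof (upper_approx_le_1 L k). lra.
Qed.

Definition canon_value (k : nat) : R :=
  proj1_sig (growing_cv _ (fun L => lower_approx_incr L k) (lower_approx_bounded k)).

Lemma lower_approx_le_canon L k : lower_approx L k <= canon_value k.
Proof.
  unfold canon_value. destruct (growing_cv _ _ _) as [l Hl]. simpl.
  apply (growing_ineq (fun L => lower_approx L k)); auto. intros n. apply lower_approx_incr.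
Qed.

Lemma canon_le_upper_approx L k : canon_value k <= upper_approx L k.
Proof.
  unfold canon_value. destruct (growing_cv _ _ _) as [l Hl]. simpl.
  apply (Un_cv_le_eventually _ _ _ L Hl). intros n Hn.
  pose proof (lower_approx_le_upper n k). pose proof (upper_approx_antimono L n k Hn). lra.
Qed.

Lemma canon_value_range k : 0 <= canon_value k <= 1.
Proof.
  pose proof (lower_approx_le_canon 0 k). pose proof (canon_le_upper_approx 0 k).
  pose proof (mass_below_nonneg 0 (factor_at u k 0)). pose proof (upper_approx_le_1 0 k).
  unfold lower_approx in *. lra.
Qed.

Hypothesis Hrec : recurrent u.
Hypothesis Hap : aperiodic u.
Hypothesis Hpos : forall w, is_factor u w -> 0 < rho w.

(* Between [T^i u < T^k u < T^j u] the cylinder of [T^k u] carries positive mass. *)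
Lemma canon_value_lt i j : shift_lt u i j -> canon_value i < canon_value j.
Proof.
  intros H. destruct (shift_lt_interpolate u Hrec Hap i j H) as [k [H1 H2]].
  destruct (shift_lt_factor_at u i k H1) as [L1 HL1].
  destruct (shift_lt_factor_at u k j H2) as [L2 HL2].
  set (L := Nat.max L1 L2).
  specialize (HL1 L ltac:(lia)). specialize (HL2 L ltac:(lia)).
  pose proof (canon_le_upper_approx L i). pose proof (lower_approx_le_canon L j).
  pose proof (mass_upto_le_below L _ _ (factor_at_in_words q u k L Hq) HL2).
  pose proof (mass_upto_le_below L _ _ (factor_at_in_words q u i L Hq) HL1).
  pose proof (Hpos _ (factor_at_is_factor u k L)).
  unfold upper_approx, lower_approx, mass_upto in *. lra.
Qed.

End Construction.

(** * Uniform distribution of the canonical representative *)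

Lemma list_max_by {A : Type} (lt : A -> A -> Prop) (Z : A -> bool) (l : list A) :
  (forall x y z, lt x y -> lt y z -> lt x z) ->
  (forall x y, In x l -> In y l -> x <> y -> lt x y \/ lt y x) ->
  (exists x, In x l /\ Z x = true) ->
  exists m, In m l /\ Z m = true /\ forall x, In x l -> Z x = true -> x = m \/ lt x m.
Proof.
  intros Htrans. induction l as [|y l IH]; intros Htot [x [Hx HZ]]; [destruct Hx|].
  assert (Htot' : forall a b, In a l -> In b l -> a <> b -> lt a b \/ lt b a)
    by (intros a b Ha Hb; apply Htot; right; auto).
  destruct (classic (exists x, In x l /\ Z x = true)) as [Hex|Hno].
  - destruct (IH Htot' Hex) as [m [Hm1 [Hm2 Hm3]]].
    destruct (Z y) eqn:Zy.
    + destruct (classic (y = m)) as [->|Hne].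
      * exists m. repeat split; [right; auto|auto|]. intros w [<-|Hw] Hz; auto.
      * destruct (Htot y m (or_introl eq_refl) (or_intror Hm1) Hne) as [Hl|Hl].
        -- exists m. repeat split; [right; auto|auto|]. intros w [<-|Hw] Hz; auto.
        -- exists y. repeat split; [left; auto|auto|]. intros w [<-|Hw] Hz; auto.
           destruct (Hm3 w Hw Hz) as [->|H]; eauto.
    + exists m. repeat split; [right; auto|auto|]. intros w [<-|Hw] Hz; auto. congruence.
  - assert (Zy : Z y = true) by (destruct Hx as [<-|Hx]; auto; exfalso; eauto).
    exists y. repeat split; [left; auto|auto|]. intros w [<-|Hw] Hz; auto. exfalso; eauto.
Qed.

Section Equidistribution.

Variable q : nat.
Variable u : word.
Hypothesis Hq : over_alphabet q u.
Variable rho : list nat -> R.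
Hypothesis Hrho : forall w, udensity (occurs_atb u w) (rho w).

(* The words below threshold [t] form an initial segment ending at a word [m] with
   [mass_below m < t], so their total mass is [mass_upto m < t + delta]. *)
Lemma cyl_mass_below_threshold L t delta : 0 <= t -> 0 < delta ->
  (forall w, In w (words q L) -> rho w < delta) ->
  cyl_mass q rho L (fun w => bltR (mass_below q rho L w) t) < t + delta.
Proof.
  intros Ht Hd Hsmall. set (Z := fun w => bltR (mass_below q rho L w) t).
  destruct (classic (exists w, In w (words q L) /\ Z w = true)) as [Hex|Hno].
  2:{ rewrite (cyl_mass_ext q rho L Z (fun _ => false)), cyl_mass_false; [lra|].
      intros w Hw. apply Bool.not_true_iff_false. intros E. eauto. }
  destruct (list_max_by (fun a b => word_ltb a b = true) Z (words q L) (word_ltb_trans)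
    (words_ltb_total q L) Hex) as [m [Hm1 [Hm2 Hm3]]].
  rewrite (cyl_mass_ext q rho L Z (fun w => word_ltb w m || word_eqb w m)%bool).
  - rewrite <- mass_upto_below by auto. unfold Z in Hm2. apply bltR_spec in Hm2.
    specialize (Hsmall m Hm1). unfold mass_upto. lra.
  - intros w Hw. destruct (Z w) eqn:Ez.
    + destruct (Hm3 w Hw Ez) as [->|H].
      * rewrite word_ltb_irrefl. symmetry. now apply word_eqb_spec.
      * now rewrite H.
    + symmetry. apply Bool.not_true_iff_false. intros H. apply Bool.orb_true_iff in H.
      destruct H as [H|H].
      * pose proof (mass_upto_le_below q u rho Hrho L w m Hw H).
        pose proof (rho_nonneg u rho Hrho w). unfold Z in Ez, Hm2. apply bltR_spec in Hm2.
        unfold mass_upto in *. assert (Hlt : mass_below q rho L w < t) by lra.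
        apply bltR_spec in Hlt. congruence.
      * apply word_eqb_spec in H. subst. congruence.
Qed.

(* Dually, the words whose cylinder ends below [t] form an initial segment bounded by the least
   word [m] with [mass_upto m >= t]. *)
Lemma cyl_mass_upto_threshold L t delta : t <= 1 -> 0 < delta ->
  (forall w, In w (words q L) -> rho w < delta) ->
  t - delta < cyl_mass q rho L (fun w => bltR (mass_upto q rho L w) t).
Proof.
  intros Ht Hd Hsmall. set (Z := fun w => bltR (mass_upto q rho L w) t).
  destruct (classic (exists w, In w (words q L) /\ negb (Z w) = true)) as [Hex|Hno].
  2:{ rewrite (cyl_mass_ext q rho L Z (fun _ => true)), (cyl_mass_true q u Hq rho Hrho); [lra|].
      intros w Hw. destruct (Z w) eqn:E; auto. exfalso. apply Hno. exists w. now rewrite E. }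
  destruct (list_max_by (fun a b => word_ltb b a = true) (fun w => negb (Z w)) (words q L)
    (fun x y z H1 H2 => word_ltb_trans z y x H2 H1)
    (fun x y Hx Hy Hne => proj1 (or_comm _ _) (words_ltb_total q L x y Hx Hy Hne)) Hex)
    as [m [Hm1 [Hm2 Hm3]]].
  assert (Hmt : t <= mass_upto q rho L m).
  { destruct (Z m) eqn:Zm; [discriminate|]. unfold Z in Zm.
    destruct (Rlt_dec (mass_upto q rho L m) t) as [Hl|Hl]; [apply bltR_spec in Hl; congruence|lra]. }
  rewrite (cyl_mass_ext q rho L Z (fun w => word_ltb w m)).
  - specialize (Hsmall m Hm1). unfold mass_upto in Hmt. unfold mass_below in Hmt. lra.
  - intros w Hw. destruct (Z w) eqn:Ez.
    + symmetry. destruct (classic (w = m)) as [->|Hne]; [now rewrite Ez in Hm2|].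
      destruct (words_ltb_total q L w m Hw Hm1 Hne) as [H|H]; auto. exfalso.
      pose proof (mass_upto_le_below q u rho Hrho L m w Hm1 H).
      pose proof (rho_nonneg u rho Hrho w). unfold Z in Ez. apply bltR_spec in Ez.
      unfold mass_upto in *. lra.
    + symmetry. apply Bool.not_true_iff_false. intros H.
      destruct (Hm3 w Hw ltac:(now rewrite Ez)) as [->|H'].
      * now rewrite word_ltb_irrefl in H.
      * exact (word_ltb_asym _ _ H H').
Qed.

Hypothesis Hap : aperiodic u.
Hypothesis Hpos : forall w, is_factor u w -> 0 < rho w.

(* With all cylinders of length [L] lighter than [eps/4], the event [canon_value k < t] is sandwiched
   between two cylinder sets whose frequencies are [eps/4]-close to [t]. *)
Lemma canon_value_equidistributed t : 0 <= t <= 1 -> forall eps, eps > 0 -> exists N : nat,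
  forall n j : nat, (N <= n)%nat -> (0 < n)%nat ->
    Rabs (INR (count_below (canon_value q u Hq rho Hrho) j t n) / INR n - t) < eps.
Proof.
  intros Ht eps He. set (a := canon_value q u Hq rho Hrho).
  destruct (long_words_rare u Hap rho Hrho Hpos (eps / 4)) as [L HL]; [lra|].
  assert (Hsmall : forall w, In w (words q L) -> rho w < eps / 4)
    by (intros w Hw; apply HL; apply in_words in Hw; tauto).
  pose proof (cyl_mass_below_threshold L t (eps / 4) ltac:(lra) ltac:(lra) Hsmall) as Hh.
  pose proof (cyl_mass_upto_threshold L t (eps / 4) ltac:(lra) ltac:(lra) Hsmall) as Hl.
  set (Zh := fun w => bltR (mass_below q rho L w) t) in Hh.
  set (Zl := fun w => bltR (mass_upto q rho L w) t) in Hl.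
  destruct (cyl_mass_udensity q u Hq rho Hrho L Zh (eps / 4)) as [N1 HN1]; [lra|].
  destruct (cyl_mass_udensity q u Hq rho Hrho L Zl (eps / 4)) as [N2 HN2]; [lra|].
  exists (Nat.max N1 N2). intros n j Hn Hn0.
  pose proof (ratio_bounds _ _ _ _ Hn0 (HN1 n j ltac:(lia) Hn0)) as Hh'.
  pose proof (ratio_bounds _ _ _ _ Hn0 (HN2 n j ltac:(lia) Hn0)) as Hl'.
  rewrite count_below_wcount.
  assert (C1 : (wcount (fun k => Zl (factor_at u k L)) j n <= wcount (fun x => bltR (a x) t) j n)%nat).
  { apply wcount_mono. intros x H. unfold Zl in H. rewrite bltR_spec in *.
    pose proof (canon_le_upper_approx q u Hq rho Hrho L x) as Hx. fold a in Hx.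
    unfold upper_approx in Hx. lra. }
  assert (C2 : (wcount (fun x => bltR (a x) t) j n <= wcount (fun k => Zh (factor_at u k L)) j n)%nat).
  { apply wcount_mono. intros x H. unfold Zh. rewrite bltR_spec in *.
    pose proof (lower_approx_le_canon q u Hq rho Hrho L x) as Hx. fold a in Hx.
    unfold lower_approx in Hx. lra. }
  apply le_INR in C1, C2.
  assert (Hnp : 0 < INR n) by (apply lt_0_INR; auto).
  apply ratio_close; auto. split; nra.
Qed.

End Equidistribution.

Lemma positive_frequencies_ergodic q u : over_alphabet q u -> recurrent u -> aperiodic u ->
  (forall w, is_factor u w -> exists rho, uniform_frequency u w rho /\ rho <> 0) ->
  valid_perm_ergodic q u.
Proof.
  intros Hq Hrec Hap Hfreq.
  assert (Hall : forall w, exists r, udensity (occurs_atb u w) r /\ (is_factor u w -> 0 < r)).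
  { intros w. destruct (classic (is_factor u w)) as [Hf|Hnf].
    - destruct (Hfreq w Hf) as [r [Hr Hr0]]. apply uniform_frequency_udensity in Hr.
      exists r. split; auto. intros _. pose proof (ucv_nonneg _ _ Hr). lra.
    - exists 0. split; [now apply udensity_non_factor|tauto]. }
  destruct (functional_choice _ Hall) as [rho Hrho].
  destruct (functional_choice _ (shift_value_exists q u Hq Hap)) as [v Hv].
  set (a := canon_value q u Hq rho (fun w => proj1 (Hrho w))).
  assert (Ha : forall i j, a i < a j <-> shift_lt u i j).
  { apply shift_lt_reflected; auto. apply canon_value_lt; auto. intros w. apply Hrho. }
  assert (Hv' : forall i j, v i < v j <-> shift_lt u i j).
  { apply shift_lt_reflected; auto. intros i j. apply (shift_value_lt q u Hq Hap); auto. }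
  exists a. split; [|split; [|split]].
  - exists v. split; auto. intros i j. now rewrite Ha, Hv'.
  - intros i j Hij. destruct (shift_lt_total u i j Hap Hij) as [H|H]; apply Ha in H; lra.
  - apply canon_value_range.
  - apply canon_value_equidistributed; auto. intros w. apply Hrho.
Qed.

Theorem mainTheorem3 (q : nat) (u : word) :
  over_alphabet q u -> recurrent u -> aperiodic u ->
  (valid_perm_ergodic q u <->
   forall w : list nat, is_factor u w ->
     exists rho : R, uniform_frequency u w rho /\ rho <> 0).
Proof.
  intros Hq Hrec Hap. split.
  - apply ergodic_positive_frequencies; auto.
  - apply positive_frequencies_ergodic; auto.
Qed.
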